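(* Consider the surface-mounted permanent magnet synchronous machine (SPMSM) model with state $x=(i_\alpha,i_\beta,\omega,\theta)^T$, input $\mathcal{V}=(v_\alpha,v_\beta)^T$ and output $y=h(x)=(i_\alpha,i_\beta)^T$: \[ \frac{d}{dt}\begin{bmatrix}i_\alpha\\ i_\beta\end{bmatrix}=\frac{1}{L_0}\Big(\mathcal{V}-R\begin{bmatrix}i_\alpha\\ i_\beta\end{bmatrix}-\psi_r\,\omega\begin{bmatrix}-\sin\theta\\ \cos\theta\end{bmatrix}\Big),\quad \frac{d\omega}{dt}=\frac{p}{J}(T_m-T_l),\quad \frac{d\theta}{dt}=\omega, \] with $T_m=\frac{3p}{2}\psi_r(i_\beta\cos\theta-i_\alpha\sin\theta)$. Let $i_d=i_\alpha\cos\theta+i_\beta\sin\theta$. Then: (i) the determinant of the $4\times4$ matrix $\frac{\partial}{\partial x}\begin{bmatrix}h\\ \mathcal{L}_fh\end{bmatrix}$ equals $\Delta_{y1}=\omega\,(\psi_r/L_0)^2$, so the rank condition holds whenever $\omega\neq0$; (ii) the determinant of the $4\times4$ matrix $\frac{\partial}{\partial x}\begin{bmatrix}h\\ \mathcal{L}_f^2h\end{bmatrix}$ equals \[ \Delta_{y2}=\frac{\psi_r^2}{L_0^2}\Big[\Big(2\omega^2+\frac{R^2}{L_0^2}+\frac{3p^2}{J}\psi_r i_d\Big)\omega-\frac{R}{L_0}\frac{d\omega}{dt}\Big]. \] In particular, at zero speed $\omega=0$ the SPMSM is locally weakly observable if the rotor acceleration $\frac{d\omega}{dt}$ is nonzero.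 *)

From HB Require Import structures.
From mathcomp Require Import all_boot all_order all_algebra.
From mathcomp Require Import all_classical all_reals all_analysis.
Set Implicit Arguments. Unset Strict Implicit. Unset Printing Implicit Defensive.
Import Order.TTheory GRing.Theory Num.Theory.
Import numFieldNormedType.Exports.
Local Open Scope ring_scope.

Section SPMSM.
Variable R : realType.

Definition ialpha (x : 'rV[R]_4) : R := x 0 0.
Definition ibeta  (x : 'rV[R]_4) : R := x 0 1.
Definition omega  (x : 'rV[R]_4) : R := x 0 2.
Definition theta  (x : 'rV[R]_4) : R := x 0 3.

Definition Tm (p psi : R) (x : 'rV[R]_4) : R :=
  (3 * p / 2) * psi * (ibeta x * cos (theta x) - ialpha x * sin (theta x)).

Definition id_cur (x : 'rV[R]_4) : R :=
  ialpha x * cos (theta x) + ibeta x * sin (theta x).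

(* Vector field f of the SPMSM for constant input (v_alpha, v_beta) and
   constant load torque T_l; parameters L0 (inductance), Rs (resistance),
   psi (flux psi_r), p (pole pairs), J (inertia). *)
Definition spmsm_f (L0 Rs psi p J Tl va vb : R) (x : 'rV[R]_4) : 'rV[R]_4 :=
  \row_(j < 4)
    match val j with
    | 0 => (va - Rs * ialpha x - psi * omega x * (- sin (theta x))) / L0
    | 1 => (vb - Rs * ibeta x - psi * omega x * cos (theta x)) / L0
    | 2 => p / J * (Tm p psi x - Tl)
    | _ => omega x
    end.

Definition spmsm_h (k : 'I_2) (x : 'rV[R]_4) : R := x 0 (widen_ord (isT : (2 <= 4)%N) k).

Definition partial (g : 'rV[R]_4 -> R) (j : 'I_4) (x : 'rV[R]_4) : R :=
  'D_(delta_mx 0 j) g x.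

Definition lie (f : 'rV[R]_4 -> 'rV[R]_4) (g : 'rV[R]_4 -> R) (x : 'rV[R]_4) : R :=
  \sum_(j < 4) partial g j x * f x 0 j.

Definition stacked (f : 'rV[R]_4 -> 'rV[R]_4) (n : nat) (i : 'I_4) : 'rV[R]_4 -> R :=
  match fintype.split (i : 'I_(2 + 2)) with
  | inl k => spmsm_h k
  | inr k => iter n (lie f) (spmsm_h k)
  end.

Definition obs_jacobian (f : 'rV[R]_4 -> 'rV[R]_4) (n : nat) (x : 'rV[R]_4) : 'M[R]_4 :=
  \matrix_(i < 4, j < 4) partial (stacked f n i) j x.

End SPMSM.

From HB Require Import structures.
From mathcomp Require Import all_boot all_order all_algebra.
From mathcomp Require Import all_classical all_reals all_analysis.
From mathcomp Require Import ring.
Set Implicit Arguments. Unset Strict Implicit. Unset Printing Implicit Defensive.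
Import Order.TTheory GRing.Theory Num.Theory.
Import numFieldNormedType.Exports.
Local Open Scope ring_scope.

(* The output block of both observability maps is [h] itself, whose Jacobian
   is [(I 0)]; hence each 4x4 determinant is the 2x2 minor of [L_f^n h] with
   respect to [(omega, theta)].  These Lie derivatives are computed
   symbolically, and the minors reduce to the claimed closed forms modulo
   [cos^2 + sin^2 = 1].  At [omega = 0] the second minor is
   [-(psi_r/L0)^2 (R/L0) d omega/dt], nonzero when the rotor accelerates. *)

Lemma det_mx22 (R : comPzRingType) (A : 'M[R]_2) :
  \det A = A 0 0 * A 1 1 - A 0 1 * A 1 0.
Proof.
rewrite (expand_det_row _ 0) !big_ord_recl big_ord0 /cofactor !det_mx11 !mxE /=.
rewrite addr0 expr0 expr1 mul1r mulN1r mulrN.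
by congr (_ * A _ _ - A _ _ * A _ _); apply: val_inj.
Qed.

Lemma det_ulsubmx1 (R : comPzRingType) m n (M : 'M[R]_(m + n)) :
  ulsubmx M = 1%:M -> ursubmx M = 0 -> \det M = \det (drsubmx M).
Proof.
by move=> M11 M12; rewrite -{1}[M]submxK M11 M12 det_lblock det1 mul1r.
Qed.

Section CoordinateDerivatives.
Variables (R : realType) (m n : nat).
Local Notation V := 'M[R]_(m, n).

Lemma is_derive_coord i j (x v : V) : is_derive x v (fun y : V => y i j) (v i j).
Proof.
have @coord : {linear V -> R}.
  by exists (fun N : V => N i j); do 2![eexists]; do ?[constructor];
     rewrite ?mxE// => ? *; rewrite ?mxE//; move=> ?; rewrite !mxE.
have dcoord := differentiable_coord x i j.
apply: DeriveDef; first exact/diff_derivable.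
have -> : (fun y : V => y i j) = coord by [].
by rewrite deriveE // diff_lin //; exact: coord_continuous.
Qed.

Lemma is_derive_comp_coord (g : R -> R) i j (x v : V) dg :
  is_derive (x i j) 1 g dg -> is_derive x v (fun y : V => g (y i j)) (dg * v i j).
Proof.
move=> gx; have dg_x : differentiable g (x i j) by apply/derivable1_diffP; case: gx.
have dcoord := differentiable_coord x i j.
have dgc : differentiable (g \o (fun y : V => y i j)) x by exact: differentiable_comp.
apply: DeriveDef; first exact: diff_derivable.
rewrite deriveE // diff_comp //= -(deriveE v dcoord).
rewrite (derive_val (is_derive := is_derive_coord i j x v)).
rewrite [in LHS](_ : v i j = v i j *: (1 : R)); last by rewrite /GRing.scale /= mulr1.
by rewrite linearZ -deriveE // (derive_val (is_derive := gx)) mulrC.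
Qed.
End CoordinateDerivatives.

Section PointwiseDerivatives.
Variables (R : realType) (V : normedModType R).
Implicit Types (F G : V -> R) (x v : V).

Lemma is_derive_cst_fun (k : R) x v : is_derive x v (fun _ : V => k) 0.
Proof. exact: is_derive_cst. Qed.

Lemma is_deriveD_fun F G x v dF dG : is_derive x v F dF -> is_derive x v G dG ->
  is_derive x v (fun y => F y + G y) (dF + dG).
Proof. exact: is_deriveD. Qed.

Lemma is_deriveN_fun F x v dF : is_derive x v F dF ->
  is_derive x v (fun y => - F y) (- dF).
Proof. exact: is_deriveN. Qed.

Lemma is_deriveM_fun F G x v dF dG : is_derive x v F dF -> is_derive x v G dG ->
  is_derive x v (fun y => F y * G y) (F x * dG + G x * dF).
Proof. exact: is_deriveM. Qed.
End PointwiseDerivatives.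

Section ObservabilityJacobian.
Variables (R : realType) (f : 'rV[R]_4 -> 'rV[R]_4) (n : nat).

Lemma partial_is_derive (g : 'rV[R]_4 -> R) j x d :
  is_derive x (delta_mx 0 j) g d -> partial g j x = d.
Proof. by move=> gd; rewrite /partial derive_val. Qed.

Lemma stacked_lshift (k : 'I_2) : stacked f n (lshift 2 k) = spmsm_h k.
Proof. by rewrite /stacked (unsplitK (inl _ k)). Qed.

Lemma stacked_rshift (k : 'I_2) : stacked f n (rshift 2 k) = iter n (lie f) (spmsm_h k).
Proof. by rewrite /stacked (unsplitK (inr _ k)). Qed.

Lemma partial_spmsm_h (k : 'I_2) j (x : 'rV[R]_4) :
  partial (spmsm_h k) j x = (widen_ord (isT : (2 <= 4)%N) k == j)%:R.
Proof. by rewrite (partial_is_derive (is_derive_coord _ _ _ _)) mxE. Qed.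

Lemma det_obs_jacobian x : let g k := iter n (lie f) (spmsm_h k) in
  \det (obs_jacobian f n x) =
  partial (g 0) 2 x * partial (g 1) 3 x - partial (g 0) 3 x * partial (g 1) 2 x.
Proof.
pose M := obs_jacobian f n x : 'M[R]_(2 + 2).
have M11 : ulsubmx M = 1%:M.
  by apply/matrixP => i j; rewrite !mxE stacked_lshift partial_spmsm_h.
have M12 : ursubmx M = 0.
  apply/matrixP => i j; rewrite !mxE stacked_lshift partial_spmsm_h.
  by rewrite (_ : (_ == _) = false) // -val_eqE /= ltn_eqF // ltn_addr.
have rshift0 : rshift 2 (0 : 'I_2) = 2 :> 'I_4 by apply: val_inj.
have rshift1 : rshift 2 (1 : 'I_2) = 3 :> 'I_4 by apply: val_inj.
by rewrite (det_ulsubmx1 M11 M12) det_mx22 !mxE !stacked_rshift rshift0 rshift1.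
Qed.
End ObservabilityJacobian.

Lemma eq_mul_cos2Dsin2 (R : realType) (a b t : R) : a = b * (cos t ^+ 2 + sin t ^+ 2) -> a = b.
Proof. by rewrite cos2Dsin2 mulr1. Qed.

Section SPMSMLieDerivatives.
Variables (R : realType) (L0 Rs psi p J Tl va vb : R).
Local Notation V := 'rV[R]_4.
Let f := spmsm_f L0 Rs psi p J Tl va vb.

Definition ialpha_dot (x : V) : R :=
  (va - Rs * ialpha x + psi * omega x * sin (theta x)) / L0.
Definition ibeta_dot (x : V) : R :=
  (vb - Rs * ibeta x - psi * omega x * cos (theta x)) / L0.
Definition omega_dot (x : V) : R :=
  p / J * (3 * p / 2 * psi * (ibeta x * cos (theta x) - ialpha x * sin (theta x)) - Tl).
Definition ialpha_ddot (x : V) : R :=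
  (- Rs * ialpha_dot x + psi * sin (theta x) * omega_dot x
   + psi * omega x ^+ 2 * cos (theta x)) / L0.
Definition ibeta_ddot (x : V) : R :=
  (- Rs * ibeta_dot x - psi * cos (theta x) * omega_dot x
   + psi * omega x ^+ 2 * sin (theta x)) / L0.

Ltac derive_tac :=
  rewrite ?/ialpha_ddot ?/ibeta_ddot ?/ialpha_dot ?/ibeta_dot ?/omega_dot ?/spmsm_h ?expr2;
  (* [g] is given explicitly: inferring it is a costly higher-order problem. *)
  repeat first
  [ apply: is_derive_cst_fun | apply: is_derive_coord
  | apply: (is_derive_comp_coord (g := sin)); exact: is_derive_sin
  | apply: (is_derive_comp_coord (g := cos)); exact: is_derive_cos
  | apply: is_deriveD_fun | apply: is_deriveN_fun | apply: is_deriveM_fun ].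

Ltac lie_tac := apply: funext => x; rewrite /lie !big_ord_recl big_ord0;
  do 4 (erewrite partial_is_derive; last by derive_tac);
  rewrite !mxE /= /Tm ?/ialpha_ddot ?/ibeta_ddot ?/ialpha_dot ?/ibeta_dot ?/omega_dot;
  rewrite /ialpha /ibeta /omega /theta; ring.

Lemma lie_ialpha : lie f (spmsm_h 0) = ialpha_dot.
Proof. by lie_tac. Qed.

Lemma lie_ibeta : lie f (spmsm_h 1) = ibeta_dot.
Proof. by lie_tac. Qed.

Lemma lie_ialpha_dot : lie f ialpha_dot = ialpha_ddot.
Proof. by lie_tac. Qed.

Lemma lie_ibeta_dot : lie f ibeta_dot = ibeta_ddot.
Proof. by lie_tac. Qed.

Hypotheses (L0_neq0 : L0 != 0) (J_neq0 : J != 0).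

Lemma det_obs_jacobian1 x : \det (obs_jacobian f 1 x) = omega x * (psi / L0) ^+ 2.
Proof.
rewrite det_obs_jacobian /= lie_ialpha lie_ibeta.
do 4 (erewrite partial_is_derive; last by derive_tac).
rewrite !mxE /= /omega; apply: (@eq_mul_cos2Dsin2 _ _ _ (x 0 3)); by field.
Qed.

Lemma det_obs_jacobian2 x : \det (obs_jacobian f 2 x) =
  psi ^+ 2 / L0 ^+ 2 *
  ((2 * omega x ^+ 2 + Rs ^+ 2 / L0 ^+ 2 + 3 * p ^+ 2 / J * psi * id_cur x) * omega x
   - Rs / L0 * omega_dot x).
Proof.
rewrite det_obs_jacobian /= lie_ialpha lie_ibeta lie_ialpha_dot lie_ibeta_dot.
do 4 (erewrite partial_is_derive; last by derive_tac).
rewrite !mxE /= /ialpha_dot /ibeta_dot /omega_dot /id_cur /ialpha /ibeta /omega /theta.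
apply: (@eq_mul_cos2Dsin2 _ _ _ (x 0 3)); field; by rewrite J_neq0 L0_neq0.
Qed.
End SPMSMLieDerivatives.

Theorem mainTheorem2 (R : realType) (L0 Rs psi p J Tl va vb : R)
  (hL0 : 0 < L0) (hRs : 0 < Rs) (hpsi : 0 < psi) (hp : 0 < p) (hJ : 0 < J) :
  let f := spmsm_f L0 Rs psi p J Tl va vb in
  (forall x : 'rV[R]_4,
     \det (obs_jacobian f 1 x) = omega x * (psi / L0) ^+ 2) /\
  (forall x : 'rV[R]_4,
     \det (obs_jacobian f 2 x) =
       psi ^+ 2 / L0 ^+ 2 *
       ((2 * omega x ^+ 2 + Rs ^+ 2 / L0 ^+ 2 + 3 * p ^+ 2 / J * psi * id_cur x)
          * omega x
        - Rs / L0 * f x 0 2)) /\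
  (forall x : 'rV[R]_4,
     omega x = 0 -> f x 0 2 != 0 -> \det (obs_jacobian f 2 x) != 0).
Proof.
move=> f; have L0_neq0 : L0 != 0 by rewrite gt_eqF.
have J_neq0 : J != 0 by rewrite gt_eqF.
have omega_dotE x : f x 0 2 = omega_dot psi p J Tl x by rewrite mxE.
have det2 x := det_obs_jacobian2 Rs psi p Tl va vb L0_neq0 J_neq0 x.
split=> [x|]; first exact: det_obs_jacobian1.
split=> x; first by rewrite omega_dotE det2.
move=> omega0 accel; rewrite det2 -omega_dotE omega0 mulr0 add0r.
by rewrite mulf_neq0 // ?oppr_eq0 ?mulf_neq0 // ?invr_eq0 ?expf_neq0 // ?gt_eqF.
Qed.
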